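(* Let $G = (V, E, b, c)$ be a weighted hypergraph and run procedure COVER on the stream of its edges. For every integer $r$, the edge collection $S(r) = \{ e \in E \mid \exists v \in V \text{ with } \mathrm{eff}_\infty(v) = r \text{ and } \mathrm{eid}_\infty(v) = \mathrm{id}(e) \}$ satisfies \[ c(S(r)) < b(V) / 2^{r-1}. \]
   Context: A weighted hypergraph $G = (V, E, b, c)$ has vertex set $V$, a multiset $E$ of non-empty edges $e \subseteq V$, benefits $b : V \to \mathbb{Q}_{>0}$ and costs $c : E \to \mathbb{Q}_{>0}$; $b(U) = \sum_{v \in U} b(v)$, $c(F) = \sum_{e \in F} c(e)$. Edges arrive in a stream $e_0, e_1, \dots$, and $\mathrm{id}(e)$ is a unique identifier of edge $e$. Procedure COVER maintains for each $v \in V$ a variable $\mathrm{eid}(v)$ (initially NULL) and an integer variable $\mathrm{eff}(v)$ (initially $-\infty$); $\mathrm{eff}_t(v)$ denotes its value just before $e_t$ is processed, and $\mathrm{eff}_\infty(v)$, $\mathrm{eid}_\infty(v)$ the values after the whole stream has been processed. For $T \subseteq e_t$ the level is $\mathrm{lev}_t(T) = \lceil \lg (b(T)/c(e_t)) \rceil$ ($\lg$ = base-2 logarithm), and $T$ is effective at time $t$ if $\mathrm{lev}_t(T) > \mathrm{eff}_t(v)$ for every $v \in T$ (the empty set is vacuously effective). When $e_t$ arrives, COVER computes an effective subset $T \subseteq e_t$ of largest benefit $b(T)$ (any such subset) and, for every $v \in T$, sets $\mathrm{eid}(v) \leftarrow \mathrm{id}(e_t)$ and $\mathrm{eff}(v)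 \leftarrow \mathrm{lev}_t(T)$. *)

(* Model of procedure COVER (relational, since COVER may pick
   any maximum-benefit effective subset). *)
From mathcomp Require Import all_boot all_order all_algebra.
Set Implicit Arguments. Unset Strict Implicit. Unset Printing Implicit Defensive.
Import Order.TTheory GRing.Theory Num.Theory.
Local Open Scope ring_scope.

Definition is_ceil_lg (x : rat) (k : int) : Prop :=
  (2%:R ^ (k - 1) < x) && (x <= 2%:R ^ k).

(* eff values live in Z ∪ {-oo}; None encodes -oo *)
Definition lt_eff (e : option int) (k : int) : bool :=
  if e is Some j then j < k else true.

Definition bsum (V : finType) (b : V -> rat) (T : {set V}) : rat :=
  \sum_(v in T) b v.

(* T is effective at the current time, for an edge of cost ct, w.r.t. eff:
   lev(T) > eff(v) for all v in T, where lev(T) = ceil(lg(b(T)/ct)).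
   (Vacuous for T = set0.) *)
Definition effective (V : finType) (b : V -> rat) (eff : V -> option int)
    (ct : rat) (T : {set V}) : Prop :=
  forall k : int, is_ceil_lg (bsum b T / ct) k ->
    forall v, v \in T -> lt_eff (eff v) k.

Definition cover_step (V : finType) (b : V -> rat) (e : {set V}) (ct : rat)
    (t : nat) (eff : V -> option int) (eid : V -> option nat)
    (eff' : V -> option int) (eid' : V -> option nat) : Prop :=
  exists T : {set V},
    [/\ T \subset e,
        effective b eff ct T,
        (forall T' : {set V}, T' \subset e -> effective b eff ct T' ->
            bsum b T' <= bsum b T) &
        (forall v,
          (v \in T -> eid' v = Some t /\
                      exists k, eff' v = Some k /\ is_ceil_lg (bsum b T / ct) k) /\
          (v \notin T -> eid' v = eid v /\ eff' v = eff v))].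

(* A complete run of COVER on the stream e_0,...,e_{n-1} (costs c t, id(e_t) = t),
   ending in the final state (eff_inf, eid_inf). *)
Definition cover_run (V : finType) (b : V -> rat) (e : nat -> {set V})
    (c : nat -> rat) (n : nat)
    (eff_inf : V -> option int) (eid_inf : V -> option nat) : Prop :=
  exists (eff : nat -> V -> option int) (eid : nat -> V -> option nat),
    [/\ (forall v, eff 0%N v = None /\ eid 0%N v = None),
        (forall t, (t < n)%N ->
           cover_step b (e t) (c t) t (eff t) (eid t) (eff t.+1) (eid t.+1)),
        eff n = eff_inf &
        eid n = eid_inf].

From mathcomp Require Import all_boot all_order all_algebra zify.
Set Implicit Arguments. Unset Strict Implicit. Unset Printing Implicit Defensive.
Import Order.TTheory GRing.Theory Num.Theory.
Local Open Scope ring_scope.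

(* Fix a level r and let B_r be the set of vertices whose current eff is at
   least r.  The invariant is that the edges currently recorded at level r cost
   either nothing or strictly less than b(B_r) / 2^(r-1).  Effective values only
   grow, so B_r only grows.  An edge e_t whose chosen set T has level r pays
   c(e_t) < b(T) / 2^(r-1), while T was disjoint from B_r (effectiveness) and
   joins B_r.  Any other edge can only remove edges from level r. *)

Lemma is_ceil_lg_uniq (x : rat) (k j : int) :
  is_ceil_lg x k -> is_ceil_lg x j -> k = j.
Proof.
wlog lt_kj : k j / k < j.
  move=> hwlog hk hj; case: (ltgtP k j) => // lt; last by rewrite (hwlog j k).
  exact: hwlog.
move=> /andP[_ x_le] /andP[x_gt _].
have : (2%:R : rat) ^ k <= 2%:R ^ (j - 1) by rewrite ler_eXz2l //; lia.
by move=> /(le_trans x_le)/(lt_le_trans x_gt); rewrite ltxx.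
Qed.

Lemma sumr_le_predU (R : numDomainType) (I : finType) (P Q P' : pred I)
    (F : I -> R) :
  (forall i, 0 <= F i) -> (forall i, P' i -> P i || Q i) ->
  \sum_(i | P' i) F i <= \sum_(i | P i) F i + \sum_(i | Q i) F i.
Proof.
move=> F_ge0 sub; rewrite big_mkcond [X in _ <= X + _]big_mkcond.
rewrite [X in _ <= _ + X]big_mkcond -big_split /=.
apply: ler_sum => i _; case: ifP => [/sub|_].
  by case: (P i) (Q i) => -[] //=; rewrite ?addr0 ?add0r ?lerDl.
by case: (P i) (Q i) => -[]; rewrite ?addr0 ?add0r ?addr_ge0.
Qed.

Lemma sumr_le_subset (R : numDomainType) (I : finType) (P P' : pred I)
    (F : I -> R) :
  (forall i, 0 <= F i) -> (forall i, P' i -> P i) ->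
  \sum_(i | P' i) F i <= \sum_(i | P i) F i.
Proof.
move=> F_ge0 sub; have := @sumr_le_predU R I P pred0 P' F F_ge0.
by rewrite big_pred0_eq addr0; apply=> i /sub ->.
Qed.

Section Benefit.
Variables (V : finType) (b : V -> rat).
Hypothesis b_ge0 : forall v, 0 <= b v.

Lemma bsum_subset (A B : {set V}) : A \subset B -> bsum b A <= bsum b B.
Proof. by move=> /subsetP sub; apply: sumr_le_subset => // v; apply: sub. Qed.

Lemma bsum_disjointU_le (A T B : {set V}) :
  [disjoint A & T] -> A :|: T \subset B -> bsum b A + bsum b T <= bsum b B.
Proof.
move=> disj /subsetP sub; rewrite /bsum -bigU //=.
by apply: sumr_le_subset => // v vAT; apply: sub; rewrite inE.
Qed.

End Benefit.

Section CoverInvariant.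
Variables (V : finType) (b : V -> rat) (n : nat) (c : nat -> rat) (r : int).
Hypothesis b_gt0 : forall v, 0 < b v.
Hypothesis c_gt0 : forall t, (t < n)%N -> 0 < c t.

Let b_ge0 v : 0 <= b v := ltW (b_gt0 v).

Definition level_cost (eff : V -> option int) (eid : V -> option nat) : rat :=
  \sum_(t < n | [exists v, (eff v == Some r) && (eid v == Some (nat_of_ord t))])
     c t.

Definition vertices_above (eff : V -> option int) : {set V} :=
  [set v | ~~ lt_eff (eff v) r].

Definition cost_invariant eff eid : Prop :=
  level_cost eff eid = 0 \/
  2%:R ^ (r - 1) * level_cost eff eid < bsum b (vertices_above eff).

Lemma level_cost_ge0 eff eid : 0 <= level_cost eff eid.
Proof. by apply: sumr_ge0 => t _; apply/ltW/c_gt0. Qed.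

Section Step.
Variables (m : nat) (eff : V -> option int) (eid : V -> option nat).
Variables (eff' : V -> option int) (eid' : V -> option nat) (T : {set V}).
Hypothesis m_lt : (m < n)%N.
Hypothesis T_effective : effective b eff (c m) T.
Hypothesis T_update : forall v, v \in T -> eid' v = Some m /\
  exists k, eff' v = Some k /\ is_ceil_lg (bsum b T / c m) k.
Hypothesis T_keep : forall v, v \notin T -> eid' v = eid v /\ eff' v = eff v.

Lemma vertices_above_step : vertices_above eff \subset vertices_above eff'.
Proof.
apply/subsetP => v; rewrite !inE; have [vT|vT] := boolP (v \in T); last first.
  by have [_ ->] := T_keep vT.
have [_ [k [-> lev_k]]] := T_update vT.
move: (T_effective lev_k vT); case: (eff v) => //= j lt_jk.
by rewrite -!leNgt => /le_trans; apply; apply: ltW.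
Qed.

Lemma level_cost_step : level_cost eff' eid' <= level_cost eff eid + c m.
Proof.
have -> : c m = \sum_(t < n | t == Ordinal m_lt) c t by rewrite big_pred1_eq.
apply: sumr_le_predU => [t|t /existsP[v /andP[/eqP eff_v /eqP eid_v]]].
  exact/ltW/c_gt0.
have [vT|vT] := boolP (v \in T).
  have [eid_m _] := T_update vT; move: eid_v; rewrite eid_m => -[t_m].
  by apply/orP; right; apply/eqP/val_inj.
have [eid_v' eff_v'] := T_keep vT; apply/orP; left.
by apply/existsP; exists v; rewrite -eid_v' -eff_v' eff_v eid_v !eqxx.
Qed.

Lemma level_cost_step_off_level :
  ~ is_ceil_lg (bsum b T / c m) r -> level_cost eff' eid' <= level_cost eff eid.
Proof.
move=> not_lev; apply: sumr_le_subset => [t|t /existsP[v /andP[/eqP eff_v eid_v]]].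
  exact/ltW/c_gt0.
have [vT|vT] := boolP (v \in T).
  by have [_ [k [eff_k lev_k]]] := T_update vT; move: eff_v lev_k; rewrite eff_k => -[->].
have [eid_v' eff_v'] := T_keep vT.
by apply/existsP; exists v; rewrite -eid_v' -eff_v' eff_v eid_v eqxx.
Qed.

Lemma vertices_above_step_at_level : is_ceil_lg (bsum b T / c m) r ->
  bsum b (vertices_above eff) + bsum b T <= bsum b (vertices_above eff').
Proof.
move=> lev_r; apply: bsum_disjointU_le => //.
  rewrite disjoint_sym disjoint_subset; apply/subsetP => v vT.
  by rewrite !inE negbK (T_effective lev_r vT).
rewrite subUset vertices_above_step; apply/subsetP => v vT.
have [_ [k [eff_k lev_k]]] := T_update vT.
by rewrite inE eff_k (is_ceil_lg_uniq lev_k lev_r) /= ltxx.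
Qed.

Lemma cost_invariant_step : cost_invariant eff eid -> cost_invariant eff' eid'.
Proof.
have pow_gt0 : (0 : rat) < 2%:R ^ (r - 1) by apply: exprz_gt0.
have above_le := bsum_subset b_ge0 vertices_above_step.
have [lev_r|not_lev] :=
  boolP ((2%:R ^ (r - 1) < bsum b T / c m) && (bsum b T / c m <= 2%:R ^ r)); last first.
  have cost_le := level_cost_step_off_level (negP not_lev).
  move=> [cost0|cost_lt]; [left | right].
    by apply/eqP; rewrite eq_le level_cost_ge0 andbT -cost0.
  apply: le_lt_trans (lt_le_trans cost_lt above_le).
  by rewrite ler_pM2l.
have edge_lt : 2%:R ^ (r - 1) * c m < bsum b T.
  by rewrite -ltr_pdivlMr ?c_gt0 //; case/andP: lev_r.
have cost_le : 2%:R ^ (r - 1) * level_cost eff' eid' <=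
    2%:R ^ (r - 1) * (level_cost eff eid + c m).
  by rewrite ler_pM2l // level_cost_step.
move=> inv; right; apply: le_lt_trans cost_le _.
apply: lt_le_trans (vertices_above_step_at_level lev_r).
rewrite mulrDr; case: inv => [->|cost_lt].
  by rewrite mulr0 add0r ltr_wpDl //; apply: sumr_ge0.
exact: ltrD.
Qed.

End Step.

Lemma cover_run_invariant (e : nat -> {set V}) eff_inf eid_inf :
  cover_run b e c n eff_inf eid_inf -> cost_invariant eff_inf eid_inf.
Proof.
move=> [eff [eid [init step <- <-]]].
suff inv m : (m <= n)%N -> cost_invariant (eff m) (eid m) by exact: inv.
elim: m => [_|m IHm lt_mn].
  left; apply: big_pred0 => t; apply/existsP => -[v].
  by rewrite (init v).1.
have [T [_ T_eff _ T_upd]] := step m lt_mn.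
apply: (cost_invariant_step lt_mn T_eff) (IHm (ltnW lt_mn)).
- by move=> v /(T_upd v).1.
- by move=> v /(T_upd v).2.
Qed.

End CoverInvariant.

Theorem lemma9 (V : finType) (b : V -> rat) (n : nat) (e : nat -> {set V})
    (c : nat -> rat) (eff_inf : V -> option int) (eid_inf : V -> option nat) :
  (0 < #|V|)%N ->
  (forall v, 0 < b v) ->
  (forall t, (t < n)%N -> e t != set0) ->
  (forall t, (t < n)%N -> 0 < c t) ->
  cover_run b e c n eff_inf eid_inf ->
  forall r : int,
    \sum_(t < n | [exists v, (eff_inf v == Some r) && (eid_inf v == Some (nat_of_ord t))])
       c t
    < bsum b [set: V] / 2%:R ^ (r - 1).
Proof.
move=> V_gt0 b_gt0 _ c_gt0 run r.
have b_ge0 v : 0 <= b v by apply: ltW.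
rewrite ltr_pdivlMr ?exprz_gt0 // mulrC.
have above_le := bsum_subset b_ge0 (subsetT (vertices_above r eff_inf)).
case: (cover_run_invariant r b_gt0 c_gt0 run) => [cost0|cost_lt].
  rewrite /level_cost in cost0; rewrite cost0 mulr0.
  have [v _] : exists v : V, v \in [set: V] by apply/set0Pn; rewrite -card_gt0 cardsT.
  apply: lt_le_trans (b_gt0 v) _.
  have -> : b v = bsum b [set v] by rewrite /bsum big_set1.
  exact/bsum_subset/subsetT.
exact: lt_le_trans above_le.
Qed.
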